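(* Let $Q=[0,1]^d$, $d\ge2$, with canonical basis $(e_i)_{i=1}^d$, and let $v:\{0,1\}^d\to\mathbb{R}^d$ be given at the vertices of $Q$ such that $v_i(x+e_i)=v_i(x)$ for every $i$ and every $x\in\{0,1\}^d$ with $x_i=0$, and $v_i(x+e_i+e_j)+v_j(x+e_i+e_j)=v_i(x)+v_j(x)$ for every $i\ne j$ and every $x\in\{0,1\}^d$ with $x_i=x_j=0$. Denote also by $v$ the $d$-linear interpolation of these values on $Q$. Then $e(v)=0$ in $Q$ (so that $v$ is affine with skew-symmetric gradient). *)

From HB Require Import structures.
From mathcomp Require Import all_boot all_order all_algebra.
From mathcomp Require Import all_classical all_reals all_analysis.
Set Implicit Arguments. Unset Strict Implicit. Unset Printing Implicit Defensive.
Import Order.TTheory GRing.Theory Num.Theory.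
Import numFieldNormedType.Exports.
Local Open Scope ring_scope.

(* Vertices of Q = [0,1]^d are boolean vectors x : {ffun 'I_d -> bool}
   (true = coordinate 1). Points of R^d are row vectors 'rV[R]_d. *)

(* x + e_i, used only when x_i = 0 (false). *)
Definition vplus (d : nat) (x : {ffun 'I_d -> bool}) (i : 'I_d)
  : {ffun 'I_d -> bool} := [ffun k => (k == i) || x k].

Definition ebasis (R : realType) (d : nat) (j : 'I_d) : 'rV[R]_d :=
  delta_mx 0 j.

Definition interp (R : realType) (d : nat)
  (v : {ffun 'I_d -> bool} -> 'I_d -> R) (y : 'rV[R]_d) (i : 'I_d) : R :=
  \sum_(x : {ffun 'I_d -> bool})
     (\prod_(k < d) (if x k then y 0 k else 1 - y 0 k)) * v x i.

Definition symgrad (R : realType) (d : nat)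
  (v : {ffun 'I_d -> bool} -> 'I_d -> R) (y : 'rV[R]_d) : 'M[R]_d :=
  \matrix_(i < d, j < d)
    (('D_(ebasis R j) (fun z => interp v z i) y
      + 'D_(ebasis R i) (fun z => interp v z j) y) / 2).

Definition in_cube (R : realType) (d : nat) (y : 'rV[R]_d) : Prop :=
  forall k : 'I_d, 0 <= y 0 k <= 1.

From HB Require Import structures.
From mathcomp Require Import all_boot all_order all_algebra.
From mathcomp Require Import all_classical all_reals all_analysis.
From mathcomp Require Import ring lra.
Import Order.TTheory GRing.Theory Num.Theory.
Import numFieldNormedType.Exports.
Local Open Scope ring_scope.
Set Implicit Arguments. Unset Strict Implicit.

(* Differentiating the d-linear interpolant in direction e_j gives the
   (d-1)-linear interpolation, in the other coordinates, of the edge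
   differences v(x + e_j) - v(x).  By the first hypothesis the edge
   differences of v_i along e_i vanish, so d_i v_i = 0.  For i <> j, grouping
   the vertices into the 2-faces spanned by e_i and e_j, the second hypothesis
   makes the contributions of each face to d_j v_i + d_i v_j cancel. *)

Lemma derive_affine_line (R : realType) (V : normedModType R) (f : V -> R)
    (a e : V) (c : R) :
  (forall h : R, f (h *: e + a) = f a + h * c) -> 'D_e f a = c.
Proof.
move=> f_line; rewrite /derive; apply: lim_near_cst => //.
near=> h; rewrite /= f_line addrC addKr.
have h_neq0 : h != 0 by near: h; exact: nbhs_dnbhs_neq.
by rewrite /GRing.scale /= mulrA mulVf // mul1r.
Unshelve. all: by end_near.
Qed.

Lemma sumr_eq0_antiinvolution (T : finType) (R : realDomainType)
    (f : T -> T) (F : T -> R) :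
  injective f -> (forall x, F (f x) = - F x) -> \sum_x F x = 0.
Proof.
move=> f_inj Ff.
have : \sum_x F x = \sum_x F (f x) by exact: reindex_inj.
under [in RHS]eq_bigr do rewrite Ff.
rewrite sumrN; lra.
Qed.

Lemma sumr_eq0_orbit4 (T : finType) (R : realDomainType)
    (f g : T -> T) (F : T -> R) :
  injective f -> injective g ->
  (forall x, F x + F (f x) + F (g x) + F (f (g x)) = 0) -> \sum_x F x = 0.
Proof.
move=> f_inj g_inj orbit0.
have Sf : \sum_x F x = \sum_x F (f x) by exact: reindex_inj.
have Sg : \sum_x F x = \sum_x F (g x) by exact: reindex_inj.
have Sfg : \sum_x F x = \sum_x F (f (g x)).
  by apply: reindex_inj => x1 x2 /f_inj /g_inj.
have : \sum_x (F x + F (f x) + F (g x) + F (f (g x))) = 0 by exact: big1.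
rewrite !big_split /= -Sf -Sg -Sfg; lra.
Qed.

Section Interpolation.
Variables (R : realType) (d : nat) (v : {ffun 'I_d -> bool} -> 'I_d -> R).
Implicit Types (x : {ffun 'I_d -> bool}) (y : 'rV[R]_d) (i j k : 'I_d).

Definition bsign (b : bool) : R := if b then 1 else -1.

Definition bweight (b : bool) (t : R) : R := if b then t else 1 - t.

Definition interp_partial y i j : R :=
  \sum_(x : {ffun 'I_d -> bool})
    bsign (x j) * (\prod_(k < d | k != j) bweight (x k) (y 0 k)) * v x i.

Lemma interp_basis_shift y i j (h : R) :
  interp v (h *: ebasis R j + y) i = interp v y i + h * interp_partial y i j.
Proof.
have shiftE k : (h *: ebasis R j + y) 0 k = h * (k == j)%:R + y 0 k.
  by rewrite /ebasis !mxE eqxx /= eq_sym.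
rewrite /interp /interp_partial mulr_sumr -big_split; apply: eq_bigr => x _ /=.
under eq_bigr do rewrite shiftE.
rewrite (bigD1 j) //= [X in _ = X * _ + _](bigD1 j) //= eqxx mulr1.
under eq_bigr => k kj do rewrite (negbTE kj) mulr0 add0r.
rewrite /bsign /bweight; case: (x j); ring.
Qed.

Lemma derive_interp y i j :
  'D_(ebasis R j) (fun z => interp v z i) y = interp_partial y i j.
Proof. by apply: derive_affine_line => h; exact: interp_basis_shift. Qed.

Definition flip i x : {ffun 'I_d -> bool} :=
  [ffun k => if k == i then ~~ x i else x k].

Lemma flipK i : involutive (flip i).
Proof.
move=> x; apply/ffunP => k; rewrite !ffunE eqxx.
by case: eqVneq => [->|//]; rewrite negbK.
Qed.

Lemma flip_inj i : injective (flip i).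
Proof. exact: inv_inj (flipK i). Qed.

Hypothesis v_edge : forall i x, x i = false -> v (vplus x i) i = v x i.

Lemma v_flip_diag i x : v (flip i x) i = v x i.
Proof.
have vplus_flip x' : x' i = false -> vplus x' i = flip i x'.
  by move=> x'i; apply/ffunP => k; rewrite !ffunE; case: eqVneq => [->|//]; rewrite x'i.
have flip_i x' : flip i x' i = ~~ x' i by rewrite ffunE eqxx.
case xi: (x i); last by rewrite -vplus_flip // v_edge.
by rewrite -[in RHS](flipK i x) -(vplus_flip (flip i x)) ?v_edge // flip_i xi.
Qed.

Lemma interp_partial_diag y i : interp_partial y i i = 0.
Proof.
rewrite /interp_partial; apply: (sumr_eq0_antiinvolution (@flip_inj i)) => x /=.
rewrite v_flip_diag ffunE eqxx.
under eq_bigr => k ki do rewrite ffunE (negbTE ki).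
by rewrite /bsign; case: (x i) => /=; ring.
Qed.

Hypothesis v_face : forall i j x, i != j -> x i = false -> x j = false ->
  v (vplus (vplus x i) j) i + v (vplus (vplus x i) j) j = v x i + v x j.

Variables (i j : 'I_d) (y : 'rV[R]_d).
Hypothesis i_neq_j : i != j.

Definition set2 x (a b : bool) : {ffun 'I_d -> bool} :=
  [ffun k => if k == i then a else if k == j then b else x k].

Lemma set2_i x a b : set2 x a b i = a.
Proof. by rewrite ffunE eqxx. Qed.

Lemma set2_j x a b : set2 x a b j = b.
Proof. by rewrite ffunE eq_sym (negbTE i_neq_j) eqxx. Qed.

Lemma set2_id x : set2 x (x i) (x j) = x.
Proof.
apply/ffunP => k; rewrite !ffunE.
by case: eqVneq => [->//|_]; case: eqVneq => [->|].
Qed.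

Lemma flip_i_set2 x : flip i x = set2 x (~~ x i) (x j).
Proof. by apply/ffunP => k; rewrite !ffunE; case: ifP => // _; case: eqVneq => [->|]. Qed.

Lemma flip_j_set2 x : flip j x = set2 x (x i) (~~ x j).
Proof.
apply/ffunP => k; rewrite !ffunE; case: eqVneq => [->|_].
  by rewrite eq_sym (negbTE i_neq_j).
by case: eqVneq => [->|].
Qed.

Lemma flip_ij_set2 x : flip i (flip j x) = set2 x (~~ x i) (~~ x j).
Proof. by apply/ffunP => k; rewrite !ffunE (negbTE i_neq_j); case: (k == i). Qed.

(* The terms of interp_partial y i j + interp_partial y j i at vertex x,
   after factoring out the weights of the coordinates other than i and j. *)
Definition face_term x : R :=
  bsign (x j) * bweight (x i) (y 0 i) * v x i
  + bsign (x i) * bweight (x j) (y 0 j) * v x j.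

Lemma face_term_sum x a b :
  face_term (set2 x a b) + face_term (set2 x (~~ a) b)
  + face_term (set2 x a (~~ b)) + face_term (set2 x (~~ a) (~~ b)) = 0.
Proof.
have vplus_i b' : vplus (set2 x false b') i = set2 x true b'.
  by apply/ffunP => k; rewrite !ffunE; case: eqVneq.
have vplus_j a' : vplus (set2 x a' false) j = set2 x a' true.
  apply/ffunP => k; rewrite !ffunE; case: eqVneq => [->|//].
  by rewrite eq_sym (negbTE i_neq_j).
have edge_i b' : v (set2 x true b') i = v (set2 x false b') i.
  by rewrite -vplus_i v_edge // set2_i.
have edge_j a' : v (set2 x a' true) j = v (set2 x a' false) j.
  by rewrite -vplus_j v_edge // set2_j.
have := v_face i_neq_j (set2_i x false false) (set2_j x false false).
rewrite vplus_i vplus_j edge_i edge_j => face.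
have corner : v (set2 x false true) i = v (set2 x false false) i
   + v (set2 x false false) j - v (set2 x true false) j by lra.
rewrite /face_term !set2_i !set2_j.
by case: a; case: b => /=; rewrite !edge_i !edge_j corner /bweight /bsign; ring.
Qed.

Definition weight_off x : R :=
  \prod_(k < d | (k != j) && (k != i)) bweight (x k) (y 0 k).

Lemma weight_off_flip_i x : weight_off (flip i x) = weight_off x.
Proof. by apply: eq_bigr => k /andP[_ ki]; rewrite ffunE (negbTE ki). Qed.

Lemma weight_off_flip_j x : weight_off (flip j x) = weight_off x.
Proof. by apply: eq_bigr => k /andP[kj _]; rewrite ffunE (negbTE kj). Qed.

Lemma interp_partial_skew : interp_partial y i j + interp_partial y j i = 0.
Proof.
have -> : interp_partial y i j + interp_partial y j i
    = \sum_x weight_off x * face_term x.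
  rewrite -big_split; apply: eq_bigr => x _ /=.
  rewrite (bigD1 i) //= [X in _ + _ * X * _ = _](bigD1 j) 1?eq_sym //=.
  have -> : \prod_(k < d | (k != i) && (k != j)) bweight (x k) (y 0 k)
      = weight_off x by apply: eq_bigl => k; rewrite andbC.
  rewrite /weight_off /face_term; ring.
apply: (sumr_eq0_orbit4 (@flip_inj i) (@flip_inj j)) => x.
rewrite !(weight_off_flip_i, weight_off_flip_j) -!mulrDr.
rewrite flip_ij_set2 flip_i_set2 flip_j_set2.
have -> : face_term x = face_term (set2 x (x i) (x j)) by rewrite set2_id.
by rewrite face_term_sum mulr0.
Qed.

End Interpolation.

Unset Implicit Arguments.

(* The conclusion holds on all of R^d and for every d. *)
Theorem lemmaA1 (R : realType) (d : nat) (hd : (2 <= d)%N)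
  (v : {ffun 'I_d -> bool} -> 'I_d -> R)
  (h1 : forall (i : 'I_d) (x : {ffun 'I_d -> bool}),
      x i = false -> v (vplus x i) i = v x i)
  (h2 : forall (i j : 'I_d) (x : {ffun 'I_d -> bool}), i != j ->
      x i = false -> x j = false ->
      v (vplus (vplus x i) j) i + v (vplus (vplus x i) j) j = v x i + v x j) :
  forall y : 'rV[R]_d, in_cube y -> symgrad v y = 0.
Proof.
move=> y _; apply/matrixP => i j; rewrite !mxE !derive_interp.
have [<-|i_neq_j] := eqVneq i j.
  by rewrite interp_partial_diag // addr0 mul0r.
by rewrite (interp_partial_skew h1 h2 _ i_neq_j) mul0r.
Qed.
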